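(* Let $G$ be an undirected graph on $n$ vertices with double cover $H$, let $\alpha\in(0,1]$, let $s\in\mathbb{R}^{2n}_{\ge0}$, let $r\in\mathbb{R}^{2n}_{\ge0}$ be a nonnegative residual, and let $p=\sigma\circ\mathrm{apr}(\alpha,s,r)$ (approximate PageRank on $H$). Then for any $j\in[1,n-1]$, \[p[\mathrm{vol}(S^p_j)]\le\alpha\big(s[\mathrm{vol}(S^p_j)]+r[\mathrm{vol}(S^p_j)]\big)+\frac{1-\alpha}{2}\Big(p\big[\mathrm{vol}(S^p_j)-|\partial(S^p_j)|\big]+p\big[\mathrm{vol}(S^p_j)+|\partial(S^p_j)|\big]\Big).\]
   Context: The double cover $H$ has vertices $v_1,v_2$ per $v\in V_G$ and edges $\{u_1,v_2\},\{u_2,v_1\}$ per $\{u,v\}\in E_G$; $\mathrm{vol}$, $\deg$ and $\partial$ (set of edges leaving a set) are in $H$. $W=\frac12(I+D_H^{-1}A_H)$; $\mathrm{pr}(\alpha,s)$ is the unique solution of $\mathrm{pr}=\alpha s+(1-\alpha)\mathrm{pr}\,W$; $\mathrm{apr}(\alpha,s,r)$ is the $q$ with $q+\mathrm{pr}(\alpha,r)=\mathrm{pr}(\alpha,s)$. $(\sigma\circ q)(u_1)=\max(0,q(u_1)-q(u_2))$, $(\sigma\circ q)(u_2)=\max(0,q(u_2)-q(u_1))$. Sweep sets and Lovász–Simonovits curve: for $q\in\mathbb{R}^{V_H}_{\ge0}$ order the vertices $x_1,x_2,\dots$ so that $q(x_1)/\deg(x_1)\ge q(x_2)/\deg(x_2)\ge\cdots$,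 let $S^q_j=\{x_1,\dots,x_j\}$, and define $q[x]$ for $x\in[0,\mathrm{vol}(V_H)]$ by $q[0]=0$, $q[\mathrm{vol}(S^q_j)]=q(S^q_j)$, linear between consecutive such points. (Here $s[\cdot]$, $r[\cdot]$, $p[\cdot]$ are the curves of $s$, $r$, $p$ respectively.) *)

From HB Require Import structures.
From mathcomp Require Import all_boot all_order all_algebra.
Set Implicit Arguments. Unset Strict Implicit. Unset Printing Implicit Defensive.
Import Order.TTheory GRing.Theory Num.Theory.
Local Open Scope ring_scope.

Section DoubleCover.
Variables (R : realFieldType) (T : finType) (e : rel T).

(* Vertices of the double cover H: (v, false) = v_1, (v, true) = v_2. *)
Local Notation VH := (T * bool)%type.

Definition adjH (x y : VH) : bool := e x.1 y.1 && (x.2 != y.2).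

Definition edgesH : {set {set VH}} :=
  [set E : {set VH} | [exists x, exists y, adjH x y && (E == [set x; y])]].

Definition degH (x : VH) : nat := #|[set y | adjH x y]|.

Definition volH (S : {set VH}) : nat := (\sum_(x in S) degH x)%N.

Definition boundaryH (S : {set VH}) : {set {set VH}} :=
  [set E in edgesH | #|E :&: S| == 1%N].

Definition Wmat (x y : VH) : R :=
  2^-1 * (x == y)%:R + 2^-1 * ((adjH x y)%:R / (degH x)%:R).

Definition mulW (q : VH -> R) (y : VH) : R := \sum_(x : VH) q x * Wmat x y.

Definition is_pr (alpha : R) (s pr : VH -> R) : Prop :=
  forall y, pr y = alpha * s y + (1 - alpha) * mulW pr y.

Definition sigmaH (q : VH -> R) (x : VH) : R :=
  Num.max 0 (q x - q (x.1, ~~ x.2)).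

Definition ratio (q : VH -> R) (x : VH) : R := q x / (degH x)%:R.

Definition sweep_rel (q : VH -> R) (a b : VH) : bool := ratio q b <= ratio q a.

Definition sweep_order (q : VH -> R) : seq VH := sort (sweep_rel q) (enum [set: VH]).

(* Piecewise-linear interpolation along an ordering l = x_1, x_2, ...:
   curve_seq l t = sum_k (q x_k / deg x_k) * min(deg x_k, max(0, t - vol(S_(k-1)))),
   which equals q(S_k) at t = vol(S_k) and is linear in between. *)
Fixpoint curve_seq (q : VH -> R) (l : seq VH) (t : R) : R :=
  match l with
  | [::] => 0
  | x :: l' => ratio q x * Num.min (degH x)%:R (Num.max 0 t)
               + curve_seq q l' (t - (degH x)%:R)
  end.

Definition LScurve (q : VH -> R) (t : R) : R := curve_seq q (sweep_order q) t.

End DoubleCover.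
Notation VH T := (T * bool)%type.

(* Let q := pr(alpha, s) - pr(alpha, r) and p := sigma o q.  Subtracting the
   PageRank equations, q and its antisymmetrisation x |-> q(x) - q(flip x) are
   again PageRank vectors, and the latter is dominated by p; so on the support
   of p we get p <= alpha (s + r o flip) + (1 - alpha) pW pointwise.  Summed over
   the sweep set S, the seed terms have support of volume at most vol S, hence
   are bounded by s[vol S] and r[vol S].  One lazy-walk step sends to S the mass
   sum_y p(y)/deg(y) * (deg(y) [y in S] + |N(y) :&: S|) / 2, a sum of two
   fractional weightings with weights at most deg(y) and total volumes
   vol S - |dS| and vol S + |dS|; the Lovasz-Simonovits curve dominates every
   such weighting, by an exchange argument along the sweep order. *)

From Pilot Require Import Defs.
From mathcomp Require Import all_boot all_order all_algebra.
From mathcomp Require Import ring lra.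
Import Order.TTheory GRing.Theory Num.Theory.
Local Open Scope ring_scope.
Set Implicit Arguments. Unset Strict Implicit. Unset Printing Implicit Defensive.

Ltac case_minmax :=
  repeat match goal with |- context [Num.max ?x ?y] => case: (leP x y) => ? end;
  repeat match goal with |- context [Num.min ?x ?y] => case: (leP x y) => ? end.

Lemma ler_sum_subset (R : realFieldType) (I : finType) (A B : {set I}) (F : I -> R) :
  (forall i, 0 <= F i) -> A \subset B -> \sum_(i in A) F i <= \sum_(i in B) F i.
Proof. by move=> F_ge0 AB; rewrite [leRHS](big_setID A) (setIidPr AB) lerDl sumr_ge0. Qed.

Lemma card_pairI (T : finType) (S : {set T}) (x y : T) : x != y ->
  #|[set x; y] :&: S| = ((x \in S) + (y \in S))%N.
Proof.
move=> xy; rewrite -sum1_card (eq_bigl (fun z => (z \in [set x; y]) && (z \in S))).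
  by rewrite big_mkcondr /= big_setU1 ?big_set1 ?inE.
by move=> z; rewrite inE.
Qed.

Lemma sum_indicator (R : realFieldType) (I : finType) (A S : {set I}) :
  \sum_(x in S) ((x \in A)%:R : R) = #|A :&: S|%:R.
Proof.
rewrite -sum1_card natr_sum big_mkcond [RHS]big_mkcond /=.
by apply: eq_bigr => x _; rewrite inE andbC; case: (x \in S); case: (x \in A).
Qed.

Lemma sum_eq_indicator (R : realFieldType) (I : finType) (S : {set I}) (y : I) :
  \sum_(x in S) ((y == x)%:R : R) = (y \in S)%:R.
Proof.
rewrite big_mkcond (bigD1 y) //= eqxx big1 ?addr0 => [|x /negbTE yx]; last first.
  by rewrite eq_sym yx if_same.
by case: (y \in S).
Qed.

Section Curve.
Variables (R : realFieldType) (T : finType) (e : rel T).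
Local Notation V := (T * bool)%type.
Local Notation dg x := ((degH e x)%:R : R).

Lemma curve_seq_le0 (q : V -> R) (l : seq V) (t : R) : t <= 0 -> curve_seq e q l t = 0.
Proof.
elim: l t => [//|x l IH] t t_le0 /=.
rewrite IH; last by have := ler0n R (degH e x); lra.
have -> : Num.max 0 t = 0 by case_minmax; lra.
by rewrite (min_idPr (ler0n R _)) mulr0 addr0.
Qed.

Definition vol_seq (l : seq V) : R := \sum_(x <- l) dg x.

Lemma vol_seq_ge0 (l : seq V) : 0 <= vol_seq l.
Proof. by apply: sumr_ge0 => x _; exact: ler0n. Qed.

Definition clamp_vol (l : seq V) (t : R) : R := Num.min (vol_seq l) (Num.max 0 t).

Lemma clamp_vol_cons (x : V) (l : seq V) (t : R) :
  clamp_vol (x :: l) t = Num.min (dg x) (Num.max 0 t) + clamp_vol l (t - dg x).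
Proof.
rewrite /clamp_vol /vol_seq big_cons -/(vol_seq l).
have := vol_seq_ge0 l; have := ler0n R (degH e x).
move: (vol_seq l) => W; case_minmax; lra.
Qed.

Lemma curve_seq_sub_le (q : V -> R) (l : seq V) (rho a b : R) :
  (forall y, y \in l -> Defs.ratio e q y <= rho) -> b <= a ->
  curve_seq e q l a - curve_seq e q l b <= rho * (clamp_vol l a - clamp_vol l b).
Proof.
elim: l a b => [|x l IH] a b ratio_le ba.
  by rewrite /= /clamp_vol /vol_seq big_nil; case_minmax; lra.
rewrite /= !clamp_vol_cons.
have := IH (a - dg x) (b - dg x) (fun y yl => ratio_le y (mem_behead (s := x :: l) yl)).
have rx : Defs.ratio e q x <= rho by apply: ratio_le; rewrite mem_head.
set ma := Num.min (dg x) (Num.max 0 a); set mb := Num.min (dg x) (Num.max 0 b).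
have m_ge0 : 0 <= ma - mb by rewrite /ma /mb; have := ler0n R (degH e x); case_minmax; lra.
have : Defs.ratio e q x * (ma - mb) <= rho * (ma - mb) by apply: ler_wpM2r.
lra.
Qed.

Lemma ratio_ge0 (q : V -> R) (x : V) : 0 <= q x -> 0 <= Defs.ratio e q x.
Proof. by move=> qx; rewrite divr_ge0 ?ler0n. Qed.

Lemma clamp_vol_sub_le (l : seq V) (t w d : R) : 0 <= w <= d -> w <= t ->
  clamp_vol l (t - w) - clamp_vol l (t - d) <= Num.min d (Num.max 0 t) - w.
Proof.
move=> /andP[w_ge0 w_le] w_le_t; rewrite /clamp_vol.
by have := vol_seq_ge0 l; move: (vol_seq l) => W; case_minmax; lra.
Qed.

(* Exchange argument: the head of a sweep ordering has the largest ratio, so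
   filling it up to [min (deg x) t] gains at least what the tail loses. *)
Lemma curve_seq_ge_weighted (q : V -> R) (l : seq V) (w : V -> R) (t : R) :
  sorted (sweep_rel e q) l -> (forall y, 0 <= q y) ->
  (forall y, 0 <= w y <= dg y) -> \sum_(y <- l) w y <= t ->
  \sum_(y <- l) Defs.ratio e q y * w y <= curve_seq e q l t.
Proof.
move=> + q_ge0 w_bnd; elim: l t => [|x l IH] t l_sorted; first by move=> _; rewrite big_nil.
rewrite !big_cons /= => sum_le.
have tail_le : forall y, y \in l -> Defs.ratio e q y <= Defs.ratio e q x.
  apply/allP; apply: order_path_min l_sorted.
  by move=> a b c; rewrite /sweep_rel => ba cb; apply: le_trans ba.
have tail_ge0 : 0 <= \sum_(y <- l) w y by apply: sumr_ge0 => y _; case/andP: (w_bnd y).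
have /andP[wx_ge0 wx_le] := w_bnd x.
have wx_le_t : w x <= t by lra.
have rx_ge0 := ratio_ge0 (q_ge0 x).
have IHx := IH (t - w x) (path_sorted l_sorted) ltac:(lra).
have := curve_seq_sub_le (a := t - w x) (b := t - dg x) tail_le ltac:(lra).
have := ler_wpM2l rx_ge0 (clamp_vol_sub_le l (w_bnd x) wx_le_t).
lra.
Qed.

Fixpoint sweep_weight (l : seq V) (t : R) (x : V) : R :=
  match l with
  | [::] => 0
  | y :: l' => (y == x)%:R * Num.min (dg y) (Num.max 0 t) + sweep_weight l' (t - dg y) x
  end.

Lemma curve_seq_sweep_weight (q : V -> R) (l : seq V) (t : R) :
  curve_seq e q l t = \sum_x Defs.ratio e q x * sweep_weight l t x.
Proof.
elim: l t => [|y l IH] t /=; first by rewrite big1 // => x _; rewrite mulr0.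
under eq_bigr => x _ do rewrite mulrDr.
rewrite big_split /= IH; congr (_ + _).
rewrite (bigD1 y) //= eqxx mul1r big1 ?addr0 // => x /negbTE yx.
by rewrite eq_sym yx mul0r mulr0.
Qed.

Lemma sweep_weight_ge0 (l : seq V) (t : R) (x : V) : 0 <= sweep_weight l t x.
Proof.
elim: l t => [//|y l IH] t /=.
rewrite addr_ge0 // mulr_ge0 ?ler0n //.
by have := ler0n R (degH e y); case_minmax; lra.
Qed.

Lemma sweep_weight_notin (l : seq V) (t : R) (x : V) : x \notin l -> sweep_weight l t x = 0.
Proof.
elim: l t => [//|y l IH] t; rewrite in_cons negb_or => /andP[xy xl] /=.
by rewrite IH // eq_sym (negbTE xy) mul0r addr0.
Qed.

Lemma sweep_weight_le_deg (l : seq V) (t : R) (x : V) : uniq l -> sweep_weight l t x <= dg x.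
Proof.
elim: l t => [|y l IH] t /=; first by rewrite ler0n.
case/andP=> yl l_uniq; case: eqP => [<-|_]; last by rewrite mul0r add0r IH.
rewrite sweep_weight_notin // mul1r addr0.
by have := ler0n R (degH e y); case_minmax; lra.
Qed.

Lemma sum_sweep_weight_le (l : seq V) (t : R) : \sum_x sweep_weight l t x <= Num.max 0 t.
Proof.
elim: l t => [|y l IH] t /=; first by rewrite big1 //; case_minmax; lra.
rewrite big_split /= (bigD1 y) //= eqxx mul1r big1 ?addr0; last first.
  by move=> x /negbTE yx; rewrite eq_sym yx mul0r.
have := IH (t - dg y); have := ler0n R (degH e y).
move: (\sum_x _) => W; case_minmax; lra.
Qed.

Lemma sum_perm_enum (l : seq V) (f : V -> R) :
  perm_eq l (enum [set: V]) -> \sum_(y <- l) f y = \sum_y f y.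
Proof.
move=> l_perm; rewrite (perm_big _ l_perm) big_enum /=.
by apply: eq_bigl => y; rewrite in_setT.
Qed.

Lemma sweep_curve_ge_weighted (q : V -> R) (l : seq V) (w : V -> R) (t : R) :
  perm_eq l (enum [set: V]) -> sorted (sweep_rel e q) l -> (forall y, 0 <= q y) ->
  (forall y, 0 <= w y <= dg y) -> \sum_y w y <= t ->
  \sum_y Defs.ratio e q y * w y <= curve_seq e q l t.
Proof.
move=> l_perm l_sorted q_ge0 w_bnd sum_le; rewrite -(sum_perm_enum _ l_perm).
by apply: curve_seq_ge_weighted; rewrite ?(sum_perm_enum _ l_perm).
Qed.

Lemma sweep_order_perm (q : V -> R) : perm_eq (sweep_order e q) (enum [set: V]).
Proof. by rewrite /sweep_order perm_sort. Qed.

Lemma sweep_order_sorted (q : V -> R) : sorted (sweep_rel e q) (sweep_order e q).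
Proof. by apply: sort_sorted => a b; exact: le_total. Qed.

Lemma LScurve_ge_weighted (q : V -> R) (w : V -> R) (t : R) :
  (forall y, 0 <= q y) -> (forall y, 0 <= w y <= dg y) -> \sum_y w y <= t ->
  \sum_y Defs.ratio e q y * w y <= LScurve e q t.
Proof. by apply: sweep_curve_ge_weighted; [exact: sweep_order_perm | exact: sweep_order_sorted]. Qed.

Lemma LScurve_le_curve_seq (q : V -> R) (l : seq V) (t : R) :
  perm_eq l (enum [set: V]) -> sorted (sweep_rel e q) l -> (forall y, 0 <= q y) -> 0 <= t ->
  LScurve e q t <= curve_seq e q l t.
Proof.
move=> l_perm l_sorted q_ge0 t_ge0; rewrite /LScurve curve_seq_sweep_weight.
apply: sweep_curve_ge_weighted => // [y|].
  by rewrite sweep_weight_ge0 sweep_weight_le_deg // (perm_uniq (sweep_order_perm q)) enum_uniq.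
by apply: le_trans (sum_sweep_weight_le _ _) _; case_minmax; lra.
Qed.

Hypothesis deg_pos : forall x : V, (0 < degH e x)%N.

Lemma natr_degH_neq0 (x : V) : dg x != 0.
Proof. by rewrite pnatr_eq0 -lt0n deg_pos. Qed.

Lemma ratioK (q : V -> R) (x : V) : Defs.ratio e q x * dg x = q x.
Proof. by rewrite divfK ?natr_degH_neq0. Qed.

Lemma curve_seq_prefix (q : V -> R) (l : seq V) (j : nat) :
  curve_seq e q l (vol_seq (take j l)) = \sum_(x <- take j l) q x.
Proof.
elim: l j => [|y l IH] [|j]; rewrite ?take0 ?big_nil //.
  by rewrite curve_seq_le0 // /vol_seq big_nil.
rewrite /= big_cons {1 2}/vol_seq big_cons -/(vol_seq (take j l)).
rewrite [dg y + _]addrC addrK IH -(ratioK q y); congr (_ * _ + _).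
by have := ler0n R (degH e y); have := vol_seq_ge0 (take j l); case_minmax; lra.
Qed.

Lemma LScurve_ge_set (q : V -> R) (A : {set V}) (t : R) :
  (forall y, 0 <= q y) -> (volH e A)%:R <= t -> \sum_(y in A) q y <= LScurve e q t.
Proof.
move=> q_ge0 volA_le; set w := fun y => (y \in A)%:R * dg y.
have -> : \sum_(y in A) q y = \sum_y Defs.ratio e q y * w y.
  rewrite big_mkcond; apply: eq_bigr => y _.
  by rewrite /w mulrCA ratioK; case: (y \in A); rewrite ?mul1r ?mul0r.
apply: LScurve_ge_weighted => // [y|].
  by rewrite /w; case: (y \in A); rewrite ?mul1r ?mul0r lexx ler0n.
apply: le_trans volA_le; rewrite /volH natr_sum [leRHS]big_mkcond; apply: ler_sum => y _.
by rewrite /w; case: (y \in A); rewrite ?mul1r ?mul0r.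
Qed.

Lemma LScurve_prefix_le (q : V -> R) (l : seq V) (j : nat) :
  perm_eq l (enum [set: V]) -> sorted (sweep_rel e q) l -> (forall y, 0 <= q y) ->
  LScurve e q (volH e [set x in take j l])%:R <= \sum_(x in [set x in take j l]) q x.
Proof.
move=> l_perm l_sorted q_ge0; set S := [set x in take j l].
have take_uniq : uniq (take j l) by rewrite take_uniq // (perm_uniq l_perm) enum_uniq.
have sum_S (F : V -> R) : \sum_(x in S) F x = \sum_(x <- take j l) F x.
  by rewrite big_uniq //; apply: eq_bigl => x; rewrite inE.
rewrite sum_S -(curve_seq_prefix q l j) /volH natr_sum sum_S.
exact: LScurve_le_curve_seq (vol_seq_ge0 _).
Qed.

End Curve.

Section Walk.
Variables (R : realFieldType) (T : finType) (e : rel T).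
Local Notation V := (T * bool)%type.

Definition flip (x : V) : V := (x.1, ~~ x.2).

Lemma flipK : involutive flip. Proof. by case=> a b; rewrite /flip negbK. Qed.

Lemma flip_inj : injective flip. Proof. exact: inv_inj flipK. Qed.

Lemma adjH_flip (x y : V) : adjH e (flip x) (flip y) = adjH e x y.
Proof. by rewrite /adjH /=; case: x.2; case: y.2. Qed.

Lemma degH_flip (x : V) : degH e (flip x) = degH e x.
Proof.
rewrite /degH -(card_preimset _ flip_inj); apply: eq_card => y.
by rewrite !inE adjH_flip.
Qed.

Lemma volH_subset (A B : {set V}) : A \subset B -> (volH e A <= volH e B)%N.
Proof. by move=> AB; rewrite /volH [X in (_ <= X)%N](big_setID A) (setIidPr AB) leq_addr. Qed.

Lemma volH_flip (A : {set V}) : volH e (flip @: A) = volH e A.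
Proof.
rewrite /volH big_imset /=; last by move=> x y _ _; exact: flip_inj.
by apply: eq_bigr => x _; rewrite degH_flip.
Qed.

Lemma Wmat_flip (x y : V) : Wmat R e (flip x) (flip y) = Wmat R e x y.
Proof. by rewrite /Wmat adjH_flip degH_flip (inj_eq flip_inj). Qed.

Lemma Wmat_ge0 (x y : V) : 0 <= Wmat R e x y.
Proof. by rewrite addr_ge0 // mulr_ge0 ?divr_ge0 ?invr_ge0 ?ler0n. Qed.

Lemma mulW_flip (q : V -> R) (x : V) : mulW e q (flip x) = mulW e (q \o flip) x.
Proof.
rewrite /mulW (reindex_inj flip_inj) /=.
by apply: eq_bigr => y _; rewrite Wmat_flip.
Qed.

Lemma mulWB (f g : V -> R) (x : V) :
  mulW e (fun y => f y - g y) x = mulW e f x - mulW e g x.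
Proof. by rewrite /mulW -sumrB; apply: eq_bigr => y _; rewrite mulrBl. Qed.

Lemma mulW_le (f g : V -> R) (x : V) : (forall y, f y <= g y) -> mulW e f x <= mulW e g x.
Proof. by move=> fg; apply: ler_sum => y _; rewrite ler_wpM2r ?Wmat_ge0. Qed.

Lemma mulW_ge0 (f : V -> R) (x : V) : (forall y, 0 <= f y) -> 0 <= mulW e f x.
Proof. by move=> f_ge0; apply: sumr_ge0 => y _; rewrite mulr_ge0 ?Wmat_ge0. Qed.

Lemma is_prB (alpha : R) (s r ps pr : V -> R) :
  is_pr e alpha s ps -> is_pr e alpha r pr ->
  is_pr e alpha (fun x => s x - r x) (fun x => ps x - pr x).
Proof. by move=> ps_pr pr_pr y; rewrite mulWB ps_pr pr_pr; ring. Qed.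

Lemma is_pr_antisym (alpha : R) (s q : V -> R) : is_pr e alpha s q ->
  is_pr e alpha (fun x => s x - s (flip x)) (fun x => q x - q (flip x)).
Proof. by move=> q_pr y; rewrite mulWB -mulW_flip q_pr (q_pr (flip y)); ring. Qed.

Lemma sigmaH_le_pr (alpha : R) (s q : V -> R) (x : V) :
  0 <= alpha <= 1 -> is_pr e alpha s q -> 0 < q x - q (flip x) ->
  sigmaH q x <= alpha * (s x - s (flip x)) + (1 - alpha) * mulW e (sigmaH q) x.
Proof.
case/andP=> alpha_ge0 alpha_le1 q_pr qx_pos.
rewrite /sigmaH -/(flip x) (max_idPr (ltW qx_pos)) (is_pr_antisym q_pr x) lerD2l.
by rewrite ler_wpM2l ?subr_ge0 // mulW_le // => y; rewrite le_max lexx orbT.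
Qed.

Definition sigmaH_supp (q : V -> R) (S : {set V}) : {set V} :=
  [set x in S | 0 < q x - q (flip x)].

Lemma sigmaH_supp_sub (q : V -> R) (S : {set V}) : sigmaH_supp q S \subset S.
Proof. by apply/subsetP => x; rewrite inE => /andP[]. Qed.

Lemma sum_sigmaH_le_pr (alpha : R) (s r q : V -> R) (S : {set V}) :
  0 <= alpha <= 1 -> (forall x, 0 <= s x) -> (forall x, 0 <= r x) ->
  is_pr e alpha (fun x => s x - r x) q ->
  \sum_(x in S) sigmaH q x <=
    alpha * (\sum_(x in sigmaH_supp q S) s x + \sum_(x in flip @: sigmaH_supp q S) r x)
    + (1 - alpha) * \sum_(x in S) mulW e (sigmaH q) x.
Proof.
move=> alpha01 s_ge0 r_ge0 q_pr; set P := sigmaH_supp q S.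
have /andP[alpha_ge0 alpha_le1] := alpha01.
have sigma_ge0 x : 0 <= sigmaH q x by rewrite le_max lexx.
have PS : P \subset S := sigmaH_supp_sub q S.
have -> : \sum_(x in S) sigmaH q x = \sum_(x in P) sigmaH q x.
  rewrite (big_setID P) /= (setIidPr PS) [X in _ + X]big1 ?addr0 // => x.
  rewrite !inE => /andP[+ xS]; rewrite xS /= -leNgt => d_le0.
  by rewrite /sigmaH -/(flip x) (max_idPl d_le0).
have pointwise x : x \in P -> sigmaH q x <=
    alpha * (s x + r (flip x)) + (1 - alpha) * mulW e (sigmaH q) x.
  rewrite inE => /andP[_ d_pos]; apply: le_trans (sigmaH_le_pr alpha01 q_pr d_pos) _.
  by rewrite lerD2r ler_wpM2l //; have := s_ge0 (flip x); have := r_ge0 x; lra.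
apply: le_trans (ler_sum _ pointwise) _.
rewrite big_split /= -!mulr_sumr big_split /= big_imset /=; last by move=> x y _ _; exact: flip_inj.
rewrite lerD2l ler_wpM2l ?subr_ge0 // ler_sum_subset // => x.
exact: mulW_ge0.
Qed.

End Walk.

Section Cut.
Variables (T : finType) (e : rel T).
Hypothesis e_sym : symmetric e.
Local Notation V := (T * bool)%type.

Lemma adjH_sym (x y : V) : adjH e x y = adjH e y x.
Proof. by rewrite /adjH e_sym eq_sym. Qed.

Lemma adjH_neq (x y : V) : adjH e x y -> x != y.
Proof. by case/andP=> _; apply: contraNneq => ->. Qed.

Definition nbrH (y : V) : {set V} := [set x | adjH e y x].

Variable S : {set V}.

Definition cut_pairs : {set V * V} :=
  [set p | (p.1 \in S) && (p.2 \in nbrH p.1 :\: S)].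

Lemma sum_card_nbrD : (\sum_(y in S) #|nbrH y :\: S|)%N = #|cut_pairs|.
Proof.
under eq_bigr => y _ do rewrite -sum1_card.
by rewrite pair_big_dep /= sum1_card; apply: eq_card => p; rewrite inE.
Qed.

Lemma sum_card_nbrI_compl : (\sum_(y in ~: S) #|nbrH y :&: S|)%N = #|cut_pairs|.
Proof.
under eq_bigr => y _ do rewrite -sum1_card.
rewrite pair_big_dep /= sum1_card.
have swap_inj : injective (fun p : V * V => (p.2, p.1)) by move=> [a b] [c d] [-> ->].
rewrite -(card_preimset _ swap_inj); apply: eq_card => -[a b].
rewrite -topredE /= !inE adjH_sym.
by case: (a \in S); case: (b \in S); rewrite ?andbT ?andbF.
Qed.

Lemma card_boundaryH : #|boundaryH e S| = #|cut_pairs|.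
Proof.
have -> : boundaryH e S = [set [set p.1; p.2] | p in cut_pairs].
  apply/setP => E; rewrite !inE; apply/idP/imsetP.
  - case/andP => /existsP[x /existsP[y /andP[xy /eqP ->]]].
    rewrite card_pairI ?adjH_neq //.
    case xS: (x \in S); case yS: (y \in S) => // _.
    + by exists (x, y); first rewrite !inE /= xS yS.
    + by exists (y, x); [rewrite !inE /= xS yS adjH_sym | rewrite setUC].
  - case=> -[a b]; rewrite !inE /= => /andP[aS /andP[bS ab]] ->.
    rewrite card_pairI ?adjH_neq // aS (negbTE bS) andbT.
    by apply/existsP; exists a; apply/existsP; exists b; rewrite ab eqxx.
rewrite card_in_imset // => -[a b] [c d]; rewrite !inE /=.
move=> /andP[aS /andP[bS _]] /andP[cS /andP[dS _]] ab_cd.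
have : a \in [set c; d] by rewrite -ab_cd !inE eqxx.
have : b \in [set c; d] by rewrite -ab_cd !inE eqxx orbT.
rewrite !inE => /orP[/eqP bc|/eqP ->] /orP[/eqP ->|/eqP ad] //.
- by move: bS; rewrite bc cS.
- by move: dS; rewrite -ad aS.
- by move: dS; rewrite -ad aS.
Qed.

Lemma volH_split : volH e S = (\sum_(y in S) #|nbrH y :&: S| + #|boundaryH e S|)%N.
Proof.
rewrite card_boundaryH -sum_card_nbrD -big_split /=.
by apply: eq_bigr => y _; rewrite cardsID.
Qed.

End Cut.

Section LazyWalkStep.
Variables (R : realFieldType) (T : finType) (e : rel T).
Hypotheses (e_sym : symmetric e) (deg_pos : forall x : VH T, (0 < degH e x)%N).
Local Notation V := (T * bool)%type.
Local Notation dg x := ((degH e x)%:R : R).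
Variable S : {set V}.

Lemma sum_Wmat_set (y : V) :
  \sum_(x in S) Wmat R e y x = 2^-1 * (y \in S)%:R + 2^-1 * (#|nbrH e y :&: S|%:R / dg y).
Proof.
rewrite big_split /= -!mulr_sumr -mulr_suml sum_eq_indicator.
have adj_nbr x : adjH e y x = (x \in nbrH e y) by rewrite inE.
by under eq_bigr => x _ do rewrite adj_nbr; rewrite sum_indicator.
Qed.

Lemma sum_mulW_le_LScurve (q : V -> R) : (forall y, 0 <= q y) ->
  \sum_(x in S) mulW e q x <=
    2^-1 * (LScurve e q ((volH e S)%:R - #|boundaryH e S|%:R)
            + LScurve e q ((volH e S)%:R + #|boundaryH e S|%:R)).
Proof.
move=> q_ge0.
set a := fun y => (#|nbrH e y :&: S|)%:R : R.
set w_in := fun y => if y \in S then a y else 0.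
set w_out := fun y => if y \in S then dg y else a y.
have a_bnd y : 0 <= a y <= dg y by rewrite ler0n ler_nat subset_leq_card ?subsetIl.
have -> : \sum_(x in S) mulW e q x =
    2^-1 * (\sum_y Defs.ratio e q y * w_in y + \sum_y Defs.ratio e q y * w_out y).
  rewrite /mulW exchange_big /= -big_split mulr_sumr; apply: eq_bigr => y _.
  rewrite -mulr_sumr sum_Wmat_set -(ratioK deg_pos q y) /w_in /w_out.
  have := natr_degH_neq0 R deg_pos y.
  by case: (y \in S); rewrite /a /= ?mulr1n ?mulr0n => ?; field.
have volS := congr1 (fun n : nat => n%:R : R) (volH_split e_sym S).
rewrite /= natrD natr_sum in volS.
rewrite ler_wpM2l ?invr_ge0 ?ler0n // lerD // LScurve_ge_weighted //.
- by move=> y; rewrite /w_in; case: (y \in S); rewrite ?a_bnd ?lexx ?ler0n.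
- by rewrite -big_mkcond volS addrK.
- by move=> y; rewrite /w_out; case: (y \in S); rewrite ?a_bnd ?lexx ?ler0n.
have out_S : \sum_(y in ~: S) a y = #|boundaryH e S|%:R.
  by rewrite -natr_sum (sum_card_nbrI_compl e_sym) (card_boundaryH e_sym).
rewrite (bigID (mem S)) /= /volH natr_sum -out_S.
rewrite [X in _ <= _ + X](eq_bigl (fun y => y \notin S)) => [|y]; last by rewrite inE.
by apply: lerD; apply: ler_sum => y; rewrite /w_out; [move=> -> | move=> /negbTE ->].
Qed.

End LazyWalkStep.

Unset Implicit Arguments.
Set Strict Implicit.

Theorem lemma10 (R : realFieldType) (T : finType) (e : rel T)
  (e_sym : symmetric e) (e_irr : irreflexive e)
  (no_isolated : forall x : VH T, (0 < degH e x)%N)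
  (alpha : R) (halpha : 0 < alpha <= 1)
  (s r prs prr : VH T -> R)
  (s_ge0 : forall x, 0 <= s x) (r_ge0 : forall x, 0 <= r x)
  (h_prs : is_pr e alpha s prs) (h_prr : is_pr e alpha r prr)
  (ord : seq (VH T))
  (ord_perm : perm_eq ord (enum [set: VH T]))
  (ord_sorted : sorted (sweep_rel e (sigmaH (fun x => prs x - prr x))) ord)
  (j : nat) (hj : (1 <= j <= #|T| - 1)%N) :
  let p := sigmaH (fun x => prs x - prr x) in
  let S := [set x in take j ord] in
  let v := (volH e S)%:R : R in
  let b := (#|boundaryH e S|)%:R : R in
  LScurve e p v <=
    alpha * (LScurve e s v + LScurve e r v)
    + (1 - alpha) / 2 * (LScurve e p (v - b) + LScurve e p (v + b)).
Proof.
cbv zeta; set p := sigmaH _; set S := [set x in take j ord].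
have /andP[alpha_gt0 alpha_le1] := halpha.
have alpha01 : 0 <= alpha <= 1 by rewrite (ltW alpha_gt0) alpha_le1.
have p_ge0 y : 0 <= p y by rewrite le_max lexx.
set P := sigmaH_supp (fun x => prs x - prr x) S.
have volP : (volH e P)%:R <= (volH e S)%:R :> R by rewrite ler_nat volH_subset ?sigmaH_supp_sub.
apply: le_trans (LScurve_prefix_le no_isolated j ord_perm ord_sorted p_ge0) _.
apply: le_trans (sum_sigmaH_le_pr S alpha01 s_ge0 r_ge0 (is_prB h_prs h_prr)) _.
rewrite -mulrA; apply: lerD; apply: ler_wpM2l.
- exact: ltW.
- by apply: lerD; apply: LScurve_ge_set; rewrite ?volH_flip.
- by rewrite subr_ge0.
- exact: sum_mulW_le_LScurve.
Qed.
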